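(* Let $\omega\in(0,1)$ and $I=\lceil\log\omega/\log\gamma\rceil$. Let $\pi_0$ be an arbitrary deterministic stationary memoryless policy and, for $i=1,\dots,I$, let $\hat q_i:\mathcal{S}\times\mathcal{A}\to\mathbb{R}$ be any function with $|\hat q_i(s,a)-q^{\pi_{i-1}}(s,a)|\le\omega$ for all $(s,a)\in\mathcal{S}\times\mathcal{A}$, and set $\pi_i=\pi_{\hat q_i,\pi_{i-1},\emptyset}$ (the CAPI update with $\mathcal{S}_{\text{fix}}=\emptyset$). Then $\pi_I$ is $5\omega/(1-\gamma)$-optimal on $\mathcal{S}$, i.e. $v^\star(s)-v^{\pi_I}(s)\le 5\omega/(1-\gamma)$ for all $s\in\mathcal{S}$.
   Context: An MDP has measurable state space $\mathcal{S}$, finite ordered action set $\mathcal{A}=(\mathcal{A}_1,\dots,\mathcal{A}_{|\mathcal{A}|})$, transition kernel $P$ and rewards in $[0,1]$; discount $\gamma\in(0,1)$. $v^\pi(s)=\mathbb{E}_{\pi,s}[\sum_{t\ge0}\gamma^tR_t]$, $q^\pi(s,a)=\mathbb{E}_{\pi,s,a}[\sum_{t\ge0}\gamma^tR_t]$, $v^\star=\sup_\pi v^\pi$. A policy $\pi$ is $\Delta$-optimal on $\mathcal{S}'$ if $v^\star(s)-v^\pi(s)\le\Delta$ for all $s\in\mathcal{S}'$. CAPI update: given $\hat q$, a deterministic policy $\pi$, $\omega>0$ and $\mathcal{S}_{\text{fix}}\subseteq\mathcal{S}$, $\pi_{\hat q,\pi,\mathcal{S}_{\text{fix}}}(s)=\arg\max_a\hat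 q(s,a)$ (ties broken by smallest index) if $s\notin\mathcal{S}_{\text{fix}}$ and $\hat q(s,\pi(s))+\omega<\max_a\hat q(s,a)-\omega$, and $=\pi(s)$ otherwise. *)

From HB Require Import structures.
From mathcomp Require Import all_boot all_order all_algebra.
From mathcomp Require Import all_classical all_reals all_analysis.
Set Implicit Arguments.
Unset Strict Implicit.
Unset Printing Implicit Defensive.
Import Order.TTheory GRing.Theory Num.Theory.
Local Open Scope classical_set_scope.
Local Open Scope ring_scope.

(* An MDP with measurable state space S, finite ordered action set
   A = 'I_n.+1 (actions ordered by their index), transition kernel
   P a : R.-pker S ~> S (P a s = law of the next state from (s,a)),
   (expected) reward function r s a in [0,1], discount gamma. *)
Section MDP.
Context {R : realType} {d : measure_display} {S : measurableType d} {n : nat}.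
Local Notation A := 'I_n.+1.
Variables (P : A -> R.-pker S ~> S) (r : S -> A -> R) (gamma : R).

(* General (history-dependent, randomized) policies: given the past
   history [(s_0,a_0); ...; (s_{t-1},a_{t-1})] and the current state s_t,
   a probability vector on actions. *)
Definition hpolicy := seq (S * A) -> S -> A -> R.
Definition is_hpolicy (pi : hpolicy) : Prop :=
  forall h s, (forall a, 0 <= pi h s a) /\ \sum_(a : A) pi h s a = 1.

Fixpoint Vn (pi : hpolicy) (k : nat) (h : seq (S * A)) (s : S) : \bar R :=
  match k with
  | 0 => 0%E
  | k'.+1 => (\sum_(a : A) (pi h s a)%:E *
                ((r s a)%:E + gamma%:E *
                   \int[P a s]_x Vn pi k' (rcons h (s, a)) x))%E
  end.

(* v^pi(s) = E_{pi,s}[sum_t gamma^t R_t] (limit of the nondecreasing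
   truncated sums). *)
Definition vpol (pi : hpolicy) (s : S) : \bar R :=
  ereal_sup (range (fun k => Vn pi k [::] s)).

Definition vstar (s : S) : \bar R :=
  ereal_sup [set vpol pi s | pi in is_hpolicy].

Definition det_policy (pi : S -> A) : hpolicy :=
  fun _ s a => (a == pi s)%:R.

Definition vdet (pi : S -> A) (s : S) : \bar R := vpol (det_policy pi) s.

(* q^pi(s,a): take action a first, then follow pi. *)
Definition first_then (a : A) (pi : S -> A) : hpolicy :=
  fun h s b => if h is [::] then (b == a)%:R else (b == pi s)%:R.

Definition qdet (pi : S -> A) (s : S) (a : A) : \bar R :=
  vpol (first_then a pi) s.

End MDP.

Section CAPI.
Context {R : realType} {T : Type} {n : nat}.
Local Notation A := 'I_n.+1.

Definition maxq (f : A -> R) : R := \big[Num.max/f ord0]_(j : A) f j.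

(* arg max_a f a, ties broken by the smallest index *)
Definition argmax_first (f : A -> R) : A :=
  odflt ord0 [pick i : A | (f i == maxq f) &&
                 [forall j : A, (f j == maxq f) ==> (i <= j)%N]].

Definition capi (qh : T -> A -> R) (pi : T -> A) (omega : R) (Sfix : set T)
    (s : T) : A :=
  if ~~ (s \in Sfix) && (qh s (pi s) + omega < maxq (qh s) - omega)
  then argmax_first (qh s) else pi s.
End CAPI.

From HB Require Import structures.
From mathcomp Require Import all_boot all_order all_algebra.
From mathcomp Require Import all_classical all_reals all_analysis.
From mathcomp Require Import measurable_realfun.
From mathcomp Require Import lra ring.
Set Implicit Arguments.
Unset Strict Implicit.
Unset Printing Implicit Defensive.
Import Order.TTheory GRing.Theory Num.Theory.
Local Open Scope classical_set_scope.
Local Open Scope ring_scope.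

(* Write [T_a u s = r s a + gamma \int u dP(a,s)] for the one-step backup.
   The value of a deterministic policy satisfies [V pi <= T_(pi s) (V pi)] and
   [q^pi(s,a) = T_a (V pi) s].  As [qh_i] is [omega]-close to [q^(pi_(i-1))],
   the CAPI update [pi_i] is [4 omega]-greedy for [V pi_(i-1)] and does not
   decrease the backed-up value at the current action, so policy improvement
   gives [T_(pi_i s) (V pi_(i-1)) <= V pi_i].  Hence if every policy earns at
   most [V pi_(i-1) + e] from every history, it earns at most
   [V pi_i + gamma e + 4 omega].  Starting from [e = 1/(1-gamma)], after [I]
   steps the gap is [(gamma^I + 4 omega)/(1-gamma)], and [gamma^I <= omega] by
   the choice of [I]. *)

Section ExtendedRealFacts.
Context {R : realType}.

Lemma expr_le_of_log_ratio (g w : R) (k : nat) :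
  0 < g < 1 -> 0 < w -> ln w / ln g <= k%:R -> g ^+ k <= w.
Proof.
move=> /andP[g_gt0 g_lt1] w_gt0 k_ge.
have ln_g_lt0 : ln g < 0 by rewrite ln_lt0 // g_gt0.
have : k%:R * ln g <= ln w.
  by rewrite -[leRHS](divfK (ltr0_neq0 ln_g_lt0)) ler_wnM2r // ltW.
by rewrite mulr_natl -lnXn // ler_ln ?posrE ?exprn_gt0.
Qed.

Local Open Scope ereal_scope.

(* The integral of a nonnegative function is a supremum over the simple
   functions below it, so it is monotone even for nonmeasurable integrands
   (e.g. values of history-dependent policies). *)
Lemma ge0_le_integral_nonmeas d (T : measurableType d)
    (mu : {measure set T -> \bar R}) (f g : T -> \bar R) :
  (forall x, 0 <= f x) -> (forall x, f x <= g x) ->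
  \int[mu]_x f x <= \int[mu]_x g x.
Proof.
move=> f_ge0 fg; have g_ge0 x : 0 <= g x := le_trans (f_ge0 x) (fg x).
rewrite !ge0_integralTE //; apply: ereal_sup_le => _ [h hf <-].
by exists h => //= x; exact: le_trans (hf x) (fg x).
Qed.

Lemma le_of_geometric_slack (g c : R) (x y : \bar R) :
  (0 <= g < 1)%R -> (0 <= c)%R ->
  (forall k, x <= y + (g ^+ k * c)%:E) -> x <= y.
Proof.
move=> /andP[g_ge0 g_lt1] c_ge0 slack; apply/lee_addgt0Pr => e e_gt0.
have e'_gt0 : (0 < e / (1 + c))%R by rewrite divr_gt0 //; lra.
have /cvgr0Pnorm_lt/(_ _ e'_gt0) [k _ small] : GRing.exp g @ \oo --> 0%R.
  by apply: cvg_expr; rewrite ger0_norm.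
have {small} gk : (g ^+ k < e / (1 + c))%R.
  by have := small k (leqnn k); rewrite /= ger0_norm // exprn_ge0.
apply: le_trans (slack k) _; apply: leeD2l; rewrite lee_fin.
apply: (le_trans (ler_wpM2r c_ge0 (ltW gk))).
by rewrite mulrAC ler_pdivrMr ?ler_pM2l //; lra.
Qed.

Lemma sume_delta n (c : 'I_n.+1) (X : 'I_n.+1 -> \bar R) :
  \sum_b ((b == c)%:R)%:E * X b = X c.
Proof.
rewrite (bigD1 c) //= eqxx mul1e big1 ?adde0 // => b /negbTE ->.
by rewrite mul0e.
Qed.

Lemma sume_convex_le n (mu : 'I_n.+1 -> R) (Y : 'I_n.+1 -> \bar R) (M : R) :
  (forall a, 0 <= mu a)%R -> (\sum_a mu a = 1)%R -> (forall a, Y a <= M%:E) ->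
  \sum_a (mu a)%:E * Y a <= M%:E.
Proof.
move=> mu_ge0 mu_sum1 YM.
apply: le_trans (_ : \sum_a (mu a)%:E * M%:E <= _).
  by apply: lee_sum => a _; apply: lee_wpmul2l; rewrite ?lee_fin.
by under eq_bigr do rewrite -EFinM; rewrite sumEFin -mulr_suml mu_sum1 mul1r.
Qed.

End ExtendedRealFacts.

Section FirstArgmax.
Context {R : realType} {n : nat}.
Local Notation A := 'I_n.+1.
Implicit Types (f : A -> R) (a i j : A).

Lemma le_maxq f j : f j <= maxq f.
Proof. by rewrite /maxq (bigD1 j) //= le_max lexx. Qed.

Lemma maxq_attained f : exists j, maxq f = f j.
Proof.
rewrite /maxq; apply: (big_ind (fun x => exists j, x = f j)) => [|x y|i _].
- by exists ord0.
- by move=> [i ->] [j ->]; case: (leP (f i) (f j)) => _; [exists j|exists i].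
- by exists i.
Qed.

Definition is_first_argmax f i :=
  (f i == maxq f) && [forall j, (f j == maxq f) ==> (i <= j)%N].

Lemma first_argmax_exists f : exists i, is_first_argmax f i.
Proof.
have [j0 fj0] := maxq_attained f.
have max_j0 : f j0 == maxq f by rewrite fj0.
case: (arg_minnP (P := fun i => f i == maxq f) (fun i : A => nat_of_ord i) max_j0).
move=> i max_i i_min.
by exists i; rewrite /is_first_argmax max_i; apply/forallP => j; apply/implyP/i_min.
Qed.

Lemma first_argmax_uniq f i j :
  is_first_argmax f i -> is_first_argmax f j -> i = j.
Proof.
move=> /andP[fi /forallP i_min] /andP[fj /forallP j_min].
by apply/val_inj/eqP; rewrite eqn_leq (implyP (i_min j) fj) (implyP (j_min i) fi).
Qed.

Lemma argmax_firstP f : is_first_argmax f (argmax_first f).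
Proof.
rewrite /argmax_first; case: pickP => [//|none].
by have [i] := first_argmax_exists f; rewrite /is_first_argmax none.
Qed.

Lemma argmax_first_eqE f a : (argmax_first f == a) = is_first_argmax f a.
Proof.
apply/eqP/idP => [<-|fa]; first exact: argmax_firstP.
exact: first_argmax_uniq (argmax_firstP f) fa.
Qed.

Lemma argmax_first_max f : f (argmax_first f) = maxq f.
Proof. by have /andP[/eqP] := argmax_firstP f. Qed.

End FirstArgmax.

Section CapiUpdate.
Context {R : realType} {T : Type} {n : nat}.
Local Notation A := 'I_n.+1.

(* Whether or not the update fires, the new action is [2w]-greedy for [qh],
   hence [4w]-greedy for any [Q] that [qh] approximates within [w]. *)
Lemma capi_improves (qh Q : T -> A -> R) (pi : T -> A) (w : R) (Sfix : set T) s :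
  s \notin Sfix -> (forall a, `|qh s a - Q s a| <= w) ->
  Q s (pi s) <= Q s (capi qh pi w Sfix s) /\
  forall a, Q s a <= Q s (capi qh pi w Sfix s) + 4 * w.
Proof.
move=> s_free qhQ.
have Q_le a : Q s a <= qh s a + w by have /ler_normlP[] := qhQ a; lra.
have le_Q a : qh s a - w <= Q s a by have /ler_normlP[] := qhQ a; lra.
have w_ge0 : 0 <= w := le_trans (normr_ge0 _) (qhQ (pi s)).
rewrite /capi s_free /=; case: ifPn => [switch|stay].
- set b := argmax_first (qh s).
  have qh_b : qh s b = maxq (qh s) := argmax_first_max (qh s).
  have Q_b := le_Q b; have Q_pi := Q_le (pi s).
  split=> [|a]; first lra.
  by have := Q_le a; have := le_maxq (qh s) a; lra.
- have {}stay : maxq (qh s) - w <= qh s (pi s) + w by rewrite leNgt.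
  split=> // a; have := Q_le a; have := le_maxq (qh s) a; have := le_Q (pi s); lra.
Qed.

End CapiUpdate.

Section MeasurablePolicy.
Context {R : realType} {d : measure_display} {S : measurableType d} {n : nat}.
Local Notation A := 'I_n.+1.

Definition measurable_policy (pi : S -> A) := forall a, measurable (pi @^-1` [set a]).

Lemma measurable_policyE (pi : S -> A) :
  measurable_policy pi <-> forall a, measurable_fun setT (fun s => pi s == a).
Proof.
have preimE a : (fun s => pi s == a) @^-1` [set true] = pi @^-1` [set a].
  by apply/seteqP; split=> s /eqP.
split=> [mpi a | mpi a].
- by apply: (measurable_fun_bool true); rewrite setTI preimE.
- by rewrite -preimE -[X in measurable X]setTI; exact: mpi.
Qed.

Lemma measurable_fun_existsA (f : A -> S -> bool) :
  (forall a, measurable_fun setT (f a)) ->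
  measurable_fun setT (fun s => [exists a, f a s]).
Proof.
move=> mf; have -> : (fun s => [exists a, f a s]) = fun s => has (f^~ s) (enum A).
  apply/funext => s; apply/existsP/hasP => [[a fa]|[a _ fa]]; last by exists a.
  by exists a; rewrite ?mem_enum.
elim: (enum A) => [|a l IH] /=; first exact: measurable_cst.
exact: measurable_or.
Qed.

Lemma measurable_fun_forallA (f : A -> S -> bool) :
  (forall a, measurable_fun setT (f a)) ->
  measurable_fun setT (fun s => [forall a, f a s]).
Proof.
move=> mf; have -> : (fun s => [forall a, f a s]) = fun s => ~~ [exists a, ~~ f a s].
  by apply/funext => s; rewrite negb_exists; apply: eq_forallb => a; rewrite negbK.
by apply/measurable_neg/measurable_fun_existsA => a; exact/measurable_neg.
Qed.

Lemma measurable_fun_policy_app (G : S -> A -> bool) (pi : S -> A) :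
  measurable_policy pi -> (forall a, measurable_fun setT (G^~ a)) ->
  measurable_fun setT (fun s => G s (pi s)).
Proof.
move=> /measurable_policyE mpi mG.
have -> : (fun s => G s (pi s)) = fun s => [exists a, (pi s == a) && G s a].
  apply/funext => s; apply/idP/existsP => [Gpi|[a /andP[/eqP-> //]]].
  by exists (pi s); rewrite eqxx.
by apply: measurable_fun_existsA => a; exact: measurable_and.
Qed.

Lemma measurable_maxq (F : S -> A -> R) :
  (forall a, measurable_fun setT (F^~ a)) -> measurable_fun setT (fun s => maxq (F s)).
Proof.
move=> mF; rewrite /maxq; elim: (index_enum A) => [|a l IH].
  by under eq_fun do rewrite big_nil; exact: mF.
by under eq_fun do rewrite big_cons; exact: measurable_maxr.
Qed.

Lemma measurable_capi (F : S -> A -> R) (pi : S -> A) (w : R) (Sfix : set S) :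
  measurable Sfix -> (forall a, measurable_fun setT (F^~ a)) ->
  measurable_policy pi -> measurable_policy (capi F pi w Sfix).
Proof.
move=> mSfix mF mpi; apply/measurable_policyE => a.
under eq_fun do rewrite /capi (fun_if (eq_op^~ a)) argmax_first_eqE.
have mmax := measurable_maxq mF.
apply: measurable_fun_ifT; last exact: (measurable_policyE pi).1 mpi a.
- apply: measurable_and.
    apply/measurable_neg/(measurable_fun_bool true); rewrite setTI.
    rewrite (_ : _ @^-1` _ = Sfix) //.
    by apply/seteqP; split=> s /=; [move/set_mem | move/mem_set].
  have := @measurable_fun_policy_app (fun s b => F s b + w < maxq (F s) - w) pi mpi.
  apply=> b; apply: measurable_fun_ltr; [exact: measurable_funD | exact: measurable_funB].
- apply: measurable_and; first exact: measurable_fun_eqr.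
  apply: measurable_fun_forallA => j; under eq_fun do rewrite implybE.
  apply: measurable_or; last exact: measurable_cst.
  exact/measurable_neg/measurable_fun_eqr.
Qed.

Lemma measurable_capi_iterates
    (pi : nat -> S -> A) (qh : nat -> S -> A -> R) (w : R) I :
  measurable_policy (pi 0%N) ->
  (forall i a, measurable_fun setT (fun s => qh i s a)) ->
  (forall i, (1 <= i <= I)%N -> pi i = capi (qh i) (pi i.-1) w set0) ->
  forall i, (i <= I)%N -> measurable_policy (pi i).
Proof.
move=> mpi0 mqh update; elim=> [//|i IH lt_iI].
by rewrite update ?lt_iI //; apply: measurable_capi => //; exact/IH/ltnW.
Qed.

End MeasurablePolicy.

Section Bellman.
Context {R : realType} {d : measure_display} {S : measurableType d} {n : nat}.
Local Notation A := 'I_n.+1.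
Variables (P : A -> R.-pker S ~> S) (r : S -> A -> R) (gamma : R).
Hypothesis gamma_ge0 : 0 <= gamma.
Hypothesis gamma_lt1 : gamma < 1.
Hypothesis r01 : forall s a, 0 <= r s a <= 1.
Hypothesis measurable_r : forall a, measurable_fun setT (r^~ a).

Definition vmax : R := (1 - gamma)^-1.

Lemma vmax_ge0 : 0 <= vmax.
Proof. by rewrite invr_ge0 subr_ge0 ltW. Qed.

Lemma vmax_fixpoint : 1 + gamma * vmax = vmax.
Proof. by rewrite /vmax; field; rewrite subr_eq0 eq_sym lt_eqF. Qed.

Local Open Scope ereal_scope.

Definition backup (a : A) (u : S -> \bar R) (s : S) : \bar R :=
  (r s a)%:E + gamma%:E * \int[P a s]_x u x.

Lemma backup_ge0 a u s : (forall x, 0 <= u x) -> 0 <= backup a u s.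
Proof.
move=> u_ge0; rewrite adde_ge0 ?mule_ge0 ?integral_ge0 ?lee_fin //.
by case/andP: (r01 s a).
Qed.

Lemma le_backup a u v s :
  (forall x, 0 <= u x) -> (forall x, u x <= v x) -> backup a u s <= backup a v s.
Proof.
move=> u_ge0 uv; rewrite leeD2l // lee_wpmul2l ?lee_fin //.
exact: ge0_le_integral_nonmeas.
Qed.

Lemma backup_le_vmax a u s :
  (forall x, 0 <= u x) -> (forall x, u x <= vmax%:E) -> backup a u s <= vmax%:E.
Proof.
move=> u_ge0 u_le; rewrite -vmax_fixpoint EFinD EFinM.
apply: leeD; first by rewrite lee_fin; case/andP: (r01 s a).
rewrite lee_wpmul2l ?lee_fin //.
apply: le_trans (ge0_le_integral_nonmeas _ u_ge0 u_le) _.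
by rewrite integral_cst // prob_kernel mule1.
Qed.

Lemma backupDr a u s (c : R) :
  measurable_fun setT u -> (forall x, 0 <= u x) -> (0 <= c)%R ->
  backup a (fun x => u x + c%:E) s = backup a u s + (gamma * c)%:E.
Proof.
move=> mu u_ge0 c_ge0; rewrite /backup ge0_integralD // integral_cst //.
by rewrite prob_kernel mule1 ge0_muleDr ?integral_ge0 ?lee_fin // addeA EFinM.
Qed.

Lemma measurable_backup a u :
  measurable_fun setT u -> (forall x, 0 <= u x) -> measurable_fun setT (backup a u).
Proof.
move=> mu u_ge0; apply: emeasurable_funD; first exact/measurable_EFinP.
apply: measurable_funeM.
exact: (measurable_fun_integral_kernel (measurable_kernel (P a)) u_ge0 mu).
Qed.

Lemma Vn_ge0 pi k h s : is_hpolicy pi -> 0 <= Vn P r gamma pi k h s.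
Proof.
move=> hpi; elim: k h s => [//|k IH] h s /=.
apply: sume_ge0 => a _; rewrite mule_ge0 ?lee_fin ?(hpi h s).1 //.
exact: backup_ge0.
Qed.

Lemma Vn_le_vmax pi k h s : is_hpolicy pi -> Vn P r gamma pi k h s <= vmax%:E.
Proof.
move=> hpi; elim: k h s => [|k IH] h s /=; first by rewrite lee_fin vmax_ge0.
apply: sume_convex_le (hpi h s).1 (hpi h s).2 _ => a.
by apply: backup_le_vmax => x; [exact: Vn_ge0 | exact: IH].
Qed.

Lemma det_policyP (pi : S -> A) : is_hpolicy (@det_policy R _ _ _ pi).
Proof.
move=> h s; split=> [a|]; first by rewrite ler0n.
by rewrite /det_policy (bigD1 (pi s)) //= eqxx big1 ?addr0 // => b /negbTE ->.
Qed.

Lemma Vn_det_policy_hist (pi : S -> A) k h h' s :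
  Vn P r gamma (det_policy pi) k h s = Vn P r gamma (det_policy pi) k h' s.
Proof.
elim: k h h' s => [//|k IH] h h' s /=; apply: eq_bigr => a _.
by congr (_ * (_ + _ * _)); apply: eq_integral => x _; exact: IH.
Qed.

Definition vtrunc (pi : S -> A) k s := Vn P r gamma (det_policy pi) k [::] s.

Lemma vtruncS pi k s : vtrunc pi k.+1 s = backup (pi s) (vtrunc pi k) s.
Proof.
rewrite /vtrunc /= /det_policy sume_delta /backup.
by congr (_ + _ * _); apply: eq_integral => x _; exact: Vn_det_policy_hist.
Qed.

Lemma vtrunc_ge0 pi k s : 0 <= vtrunc pi k s.
Proof. exact/Vn_ge0/det_policyP. Qed.

Lemma vtrunc_le_vmax pi k s : vtrunc pi k s <= vmax%:E.
Proof. exact/Vn_le_vmax/det_policyP. Qed.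

Lemma measurable_vtrunc pi k : measurable_policy pi -> measurable_fun setT (vtrunc pi k).
Proof.
move=> /measurable_policyE mpi; elim: k => [|k IH]; first exact: measurable_cst.
have -> : vtrunc pi k.+1 = fun s => \sum_b ((pi s == b)%:R)%:E * backup b (vtrunc pi k) s.
  apply/funext => s; rewrite vtruncS.
  by under eq_bigr do rewrite eq_sym; rewrite sume_delta.
apply: emeasurable_sum => b; apply: emeasurable_funM.
  apply/measurable_EFinP.
  rewrite (_ : (fun s => _) = fun s => if pi s == b then 1%R else 0%R).
    exact: measurable_fun_ifT.
  by apply/funext => s; case: (_ == _).
by apply: measurable_backup => // x; exact: vtrunc_ge0.
Qed.

Lemma vtrunc_le_succ pi k s : vtrunc pi k s <= vtrunc pi k.+1 s.
Proof.
elim: k s => [|k IH] s; first exact: vtrunc_ge0.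
rewrite vtruncS [vtrunc _ k.+2 _]vtruncS.
by apply: le_backup => x; [exact: vtrunc_ge0 | exact: IH].
Qed.

Lemma vtrunc_nondecreasing pi s : {homo vtrunc pi ^~ s : k m / (k <= m)%N >-> k <= m}.
Proof. by apply/nondecreasing_seqP => k; exact: vtrunc_le_succ. Qed.

Lemma vtrunc_tail pi k m s : measurable_policy pi ->
  vtrunc pi (k + m) s <= vtrunc pi k s + (gamma ^+ k * vmax)%:E.
Proof.
move=> mpi; elim: k s => [|k IH] s.
  by rewrite add0n expr0 mul1r add0e; exact: vtrunc_le_vmax.
rewrite addSn !vtruncS; apply: le_trans (le_backup _ _ (fun x => vtrunc_ge0 _ _ x) IH) _.
rewrite backupDr ?exprS ?mulrA //; first exact: measurable_vtrunc.
  exact: vtrunc_ge0.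
by rewrite mulr_ge0 ?exprn_ge0 ?vmax_ge0.
Qed.

Local Notation V := (vdet P r gamma).

Lemma vtrunc_le_vdet pi k s : vtrunc pi k s <= V pi s.
Proof. by apply: ereal_sup_ubound; exists k. Qed.

Lemma vdet_ge0 pi s : 0 <= V pi s.
Proof. exact: le_trans (vtrunc_ge0 pi 0 s) (vtrunc_le_vdet pi 0 s). Qed.

Lemma vdet_le_vmax pi s : V pi s <= vmax%:E.
Proof. by apply: ge_ereal_sup => _ [k _ <-]; exact: vtrunc_le_vmax. Qed.

Lemma vdet_fin_num pi s : V pi s \is a fin_num.
Proof. by rewrite ge0_fin_numE ?vdet_ge0 // (le_lt_trans (vdet_le_vmax pi s)) ?ltey. Qed.

Lemma vdet_le_vtrunc pi k s : measurable_policy pi ->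
  V pi s <= vtrunc pi k s + (gamma ^+ k * vmax)%:E.
Proof.
move=> mpi; apply: ge_ereal_sup => _ [m _ <-].
have [km|/ltnW mk] := leqP k m; first by rewrite -(subnKC km); exact: vtrunc_tail.
rewrite (le_trans (vtrunc_nondecreasing pi s mk)) // leeDl // lee_fin.
by rewrite mulr_ge0 ?exprn_ge0 ?vmax_ge0.
Qed.

Lemma measurable_vdet pi : measurable_policy pi -> measurable_fun setT (V pi).
Proof.
move=> mpi; have -> : V pi = fun s => esups (fun k => vtrunc pi k s) 0%N.
  apply/funext => s; rewrite /vdet /vpol /esups /sdrop /=; congr ereal_sup.
  by apply/seteqP; split=> _ [k _ <-]; exists k.
by apply: measurable_fun_esups => k; exact: measurable_vtrunc.
Qed.

Lemma backup_vdetDr pi a s (c : R) : measurable_policy pi -> (0 <= c)%R ->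
  backup a (fun x => V pi x + c%:E) s = backup a (V pi) s + (gamma * c)%:E.
Proof.
by move=> mpi c_ge0; rewrite backupDr //; [exact: measurable_vdet | exact: vdet_ge0].
Qed.

Lemma Vn_first_then_hist a pi k h s : h != [::] ->
  Vn P r gamma (first_then a pi) k h s = Vn P r gamma (det_policy pi) k h s.
Proof.
elim: k h s => [//|k IH] h s h_nil /=; apply: eq_bigr => b _.
congr (_ * (_ + _ * _)); first by case: h h_nil.
by apply: eq_integral => x _; apply: IH; case: (h).
Qed.

Lemma Vn_first_thenS a pi k s :
  Vn P r gamma (first_then a pi) k.+1 [::] s = backup a (vtrunc pi k) s.
Proof.
rewrite /= sume_delta /backup; congr (_ + _ * _); apply: eq_integral => x _.
by rewrite Vn_first_then_hist //; exact: Vn_det_policy_hist.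
Qed.

Lemma qdet_backup pi s a : measurable_policy pi ->
  qdet P r gamma pi s a = backup a (V pi) s.
Proof.
move=> mpi; apply/eqP; rewrite eq_le; apply/andP; split.
  apply: ge_ereal_sup => _ [[|k] _ <-]; first exact/backup_ge0/vdet_ge0.
  rewrite Vn_first_thenS.
  by apply: le_backup => x; [exact: vtrunc_ge0 | exact: vtrunc_le_vdet].
apply: (@le_of_geometric_slack _ gamma (gamma * vmax)) => [||k].
- by rewrite gamma_ge0.
- by rewrite mulr_ge0 ?vmax_ge0.
apply: le_trans (le_backup a s (vdet_ge0 pi) (fun x => vdet_le_vtrunc k x mpi)) _.
rewrite backupDr ?mulr_ge0 ?exprn_ge0 ?vmax_ge0 //; first last.
- exact: vtrunc_ge0.
- exact: measurable_vtrunc.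
rewrite mulrCA leeD2r //; apply: ereal_sup_ubound.
by exists k.+1 => //; rewrite Vn_first_thenS.
Qed.

Lemma vdet_le_backup pi s : V pi s <= backup (pi s) (V pi) s.
Proof.
apply: ge_ereal_sup => _ [[|k] _ <-]; first exact/backup_ge0/vdet_ge0.
rewrite -[Vn _ _ _ _ _ _ _]/(vtrunc pi k.+1 s) vtruncS.
by apply: le_backup => x; [exact: vtrunc_ge0 | exact: vtrunc_le_vdet].
Qed.

(* By induction [V pi <= vtrunc pi' k + gamma^k vmax]; one more backup and
   [k -> oo] give the claim. *)
Lemma policy_improvement (pi pi' : S -> A) s :
  measurable_policy pi' ->
  (forall x, V pi x <= backup (pi' x) (V pi) x) ->
  backup (pi' s) (V pi) s <= V pi' s.
Proof.
move=> mpi' improves.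
have step k x : (forall y, V pi y <= vtrunc pi' k y + (gamma ^+ k * vmax)%:E) ->
    backup (pi' x) (V pi) x <= vtrunc pi' k.+1 x + (gamma ^+ k.+1 * vmax)%:E.
  move=> Vk; apply: le_trans (le_backup _ _ (vdet_ge0 pi) Vk) _.
  rewrite backupDr ?mulr_ge0 ?exprn_ge0 ?vmax_ge0 ?vtruncS ?exprS ?mulrA //.
  - exact: measurable_vtrunc.
  - exact: vtrunc_ge0.
have trunc k y : V pi y <= vtrunc pi' k y + (gamma ^+ k * vmax)%:E.
  elim: k y => [|k IH] y; first by rewrite expr0 mul1r add0e vdet_le_vmax.
  exact: le_trans (improves y) (step k y IH).
apply: (@le_of_geometric_slack _ gamma (gamma * vmax)) => [||k].
- by rewrite gamma_ge0.
- by rewrite mulr_ge0 ?vmax_ge0.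
apply: le_trans (step k s (trunc k)) _.
by rewrite exprSr -mulrA leeD2r // vtrunc_le_vdet.
Qed.

(* Uniform in the history [h], so that the bound survives one step of an
   arbitrary history-dependent policy. *)
Definition suboptimality_le (pi : S -> A) (e : R) := forall mu, is_hpolicy mu ->
  forall k h s, Vn P r gamma mu k h s <= V pi s + e%:E.

Lemma vstar_le_suboptimality pi e s :
  suboptimality_le pi e -> vstar P r gamma s <= V pi s + e%:E.
Proof.
move=> pi_e; apply: ge_ereal_sup => _ [mu hmu <-].
by apply: ge_ereal_sup => _ [k _ <-]; exact: pi_e.
Qed.

Lemma suboptimality_contraction (pi pi' : S -> A) (e w : R) :
  measurable_policy pi -> (0 <= e)%R -> (0 <= w)%R ->
  (forall s a, backup a (V pi) s <= backup (pi' s) (V pi) s + (4 * w)%:E) ->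
  (forall s, backup (pi' s) (V pi) s <= V pi' s) ->
  suboptimality_le pi e -> suboptimality_le pi' (gamma * e + 4 * w).
Proof.
move=> mpi e_ge0 w_ge0 greedy improves pi_e mu hmu [|k] h s.
  by rewrite /= adde_ge0 ?vdet_ge0 // lee_fin addr_ge0 ?mulr_ge0.
rewrite /= -(fineK (vdet_fin_num pi' s)) -EFinD.
apply: sume_convex_le (hmu h s).1 (hmu h s).2 _ => a.
apply: le_trans (le_backup _ _ (fun y => Vn_ge0 _ _ y hmu) (pi_e mu hmu k _)) _.
rewrite backup_vdetDr //.
apply: le_trans (leeD2r _ (le_trans (greedy s a) (leeD2r _ (improves s)))) _.
by rewrite -(fineK (vdet_fin_num pi' s)) -!EFinD lee_fin; lra.
Qed.

Lemma capi_suboptimality_contraction (pi : S -> A) (qh : S -> A -> R) (w e : R) :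
  measurable_policy pi -> measurable_policy (capi qh pi w set0) ->
  (0 <= e)%R -> (0 <= w)%R ->
  (forall s a, `|(qh s a)%:E - qdet P r gamma pi s a| <= w%:E) ->
  suboptimality_le pi e -> suboptimality_le (capi qh pi w set0) (gamma * e + 4 * w).
Proof.
move=> mpi mpi' e_ge0 w_ge0 qh_close.
pose Q s a := fine (backup a (V pi) s).
have QE s a : backup a (V pi) s = (Q s a)%:E.
  rewrite /Q fineK // ge0_fin_numE ?(backup_ge0 _ _ (vdet_ge0 pi)) //.
  by rewrite (le_lt_trans (backup_le_vmax _ _ (vdet_ge0 pi) (vdet_le_vmax pi))) ?ltey.
have qhQ s a : (`|qh s a - Q s a| <= w)%R.
  by have := qh_close s a; rewrite qdet_backup // QE -EFinB abse_EFin lee_fin.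
have improves s := capi_improves pi (negbT (in_set0 s)) (qhQ s).
apply: suboptimality_contraction => // s.
- by move=> a; rewrite !QE -EFinD lee_fin; exact: (improves s).2.
apply: policy_improvement => // x.
by rewrite (le_trans (vdet_le_backup pi x)) // !QE lee_fin; exact: (improves x).1.
Qed.

Lemma suboptimality_le_vmax pi e : (vmax <= e)%R -> suboptimality_le pi e.
Proof.
move=> vmax_e mu hmu k h s; apply: le_trans (Vn_le_vmax _ _ _ hmu) _.
by rewrite -[X in X <= _]add0e leeD ?vdet_ge0 ?lee_fin.
Qed.

Lemma capi_iterates_suboptimality
    (pi : nat -> S -> A) (qh : nat -> S -> A -> R) (w : R) I :
  (0 <= w)%R -> (forall i, (i <= I)%N -> measurable_policy (pi i)) ->
  (forall i, (1 <= i <= I)%N -> forall s a,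
     `|(qh i s a)%:E - qdet P r gamma (pi i.-1) s a| <= w%:E) ->
  (forall i, (1 <= i <= I)%N -> pi i = capi (qh i) (pi i.-1) w set0) ->
  forall i, (i <= I)%N -> suboptimality_le (pi i) (gamma ^+ i * vmax + 4 * w * vmax).
Proof.
move=> w_ge0 mpi qh_close update; elim=> [_|i IH lt_iI].
  by apply: suboptimality_le_vmax; rewrite expr0 mul1r lerDl !mulr_ge0 ?vmax_ge0.
have ok : (1 <= i.+1 <= I)%N by rewrite lt_iI.
have -> : (gamma ^+ i.+1 * vmax + 4 * w * vmax =
           gamma * (gamma ^+ i * vmax + 4 * w * vmax) + 4 * w)%R.
  by rewrite -{2}vmax_fixpoint exprS; ring.
rewrite (update _ ok); apply: capi_suboptimality_contraction => //.
- exact/mpi/ltnW.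
- by rewrite -(update _ ok); exact: mpi.
- by rewrite addr_ge0 ?mulr_ge0 ?exprn_ge0 ?vmax_ge0.
- exact: qh_close ok.
- exact/IH/ltnW.
Qed.

End Bellman.

Theorem theorem3p5 (R : realType) (d : measure_display) (S : measurableType d)
  (n : nat) (P : 'I_n.+1 -> R.-pker S ~> S) (r : S -> 'I_n.+1 -> R)
  (gamma : R)
  (hgamma : 0 < gamma < 1)
  (hr : forall s a, 0 <= r s a <= 1)
  (hrm : forall a, measurable_fun setT (fun s => r s a))
  (omega : R) (homega : 0 < omega < 1)
  (I : nat) (hI : (I : int) = Num.ceil (ln omega / ln gamma))
  (pi : nat -> S -> 'I_n.+1) (qh : nat -> S -> 'I_n.+1 -> R)
  (hpi0 : forall a, measurable (pi 0%N @^-1` [set a]))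
  (hqm : forall i a, measurable_fun setT (fun s => qh i s a))
  (hq : forall i, (1 <= i <= I)%N -> forall s a,
      (`| (qh i s a)%:E - qdet P r gamma (pi i.-1) s a | <= omega%:E)%E)
  (hupd : forall i, (1 <= i <= I)%N ->
      pi i = capi (qh i) (pi i.-1) omega set0) :
  forall s, (vstar P r gamma s - vdet P r gamma (pi I) s
             <= (5 * omega / (1 - gamma))%:E)%E.
Proof.
have [gamma_gt0 gamma_lt1] := andP hgamma; have gamma_ge0 := ltW gamma_gt0.
have [omega_gt0 _] := andP homega; have omega_ge0 := ltW omega_gt0.
have mpi := measurable_capi_iterates hpi0 hqm hupd.
have subopt := capi_iterates_suboptimality gamma_ge0 gamma_lt1 hr hrm omega_ge0
  mpi hq hupd (leqnn I).
have gamma_I : gamma ^+ I <= omega.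
  by apply: expr_le_of_log_ratio => //; rewrite -[I%:R]/(I%:~R) hI ceil_ge.
move=> s; rewrite leeBlDr ?(vdet_fin_num P gamma_ge0 gamma_lt1 hr) //.
apply: le_trans (vstar_le_suboptimality s subopt) _.
rewrite addeC leeD2r ?(vdet_fin_num P gamma_ge0 gamma_lt1 hr) // lee_fin -mulrDl.
by rewrite ler_wpM2r ?vmax_ge0 //; lra.
Qed.
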